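(* Let $F$ be the elementary cellular automaton with rule number 28. For every nonempty finite word $u\in\{0,1\}^*$, the deterministic communication complexity of $\textsc{SInv}_{F,u}$ restricted to inputs of length $n$ is bounded by a constant independent of $n$.
   Context: An elementary cellular automaton (ECA) with rule number $N\in\{0,\dots,255\}$ is the map $F:\{0,1\}^{\mathbb Z}\to\{0,1\}^{\mathbb Z}$ given by $F(x)_i=f(x_{i-1},x_i,x_{i+1})$. Here the local rule $f:\{0,1\}^3\to\{0,1\}$ is determined by $N=\sum_{a,b,c\in\{0,1\}}2^{4a+2b+c}f(a,b,c)$. For a nonempty finite word $u$, $p_u\in\{0,1\}^{\mathbb Z}$ is defined by $(p_u)_i=u_{i\bmod |u|}$. For a finite word $x$, $p_u[x]$ is the configuration equal to $x$ on positions $0,\dots,|x|-1$ and to $p_u$ elsewhere. $\textsc{SInv}_{F,u}$ is the decision problem: on input a finite word $x$, decide whether there is an integer $w$ such that for all $t\ge0$ the set of positions where $F^t(p_u)$ and $F^t(p_u[x])$ differ is contained in an interval of length $w$. For each $n$, it is regarded as a function $\{0,1\}^n\to\{0,1\}$. For a function $g:X\times Y\to Z$, $D(g)$ is the minimal depth of a deterministic two-party protocol computing $g$. In such a protocol, Alice knows $x$ and Bob knows $y$. The protocol is a binary tree: each internal node is labelled by a function of Alice's input only or of Bob's input only, with values in $\{\text{left},\text{right}\}$, and each leaf is labelled by an output value. For $g:\{0,1\}^m\to Z$, set $D(g)=\max_{0\le i<m}D(g_i)$, where $g_i:\{0,1\}^i\times\{0,1\}^{m-i}\to Z$ is $g_i(x,y)=g(xy)$.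 *)

From Stdlib Require Import ZArith List Bool.
Import ListNotations.
Open Scope Z_scope.

Definition config := Z -> bool.

Definition local_rule (N : nat) (a b c : bool) : bool :=
  Z.testbit (Z.of_nat N) (4 * Z.b2z a + 2 * Z.b2z b + Z.b2z c).

Definition eca (N : nat) (x : config) : config :=
  fun i => local_rule N (x (i - 1)) (x i) (x (i + 1)).

Definition iterF (F : config -> config) (t : nat) (c : config) : config :=
  Nat.iter t F c.

Definition periodic (u : list bool) : config :=
  fun i => nth (Z.to_nat (i mod Z.of_nat (length u))) u false.

Definition patch (u x : list bool) : config :=
  fun i => if (0 <=? i) && (i <? Z.of_nat (length x))
           then nth (Z.to_nat i) x false else periodic u i.

Definition SInv (F : config -> config) (u : list bool) (x : list bool) : Prop :=
  exists w : Z, forall t : nat, exists a : Z, forall i : Z,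
    iterF F t (periodic u) i <> iterF F t (patch u x) i -> a <= i < a + w.

Inductive protocol (X Y R : Type) : Type :=
| Leaf : R -> protocol X Y R
| NodeA : (X -> bool) -> protocol X Y R -> protocol X Y R -> protocol X Y R
| NodeB : (Y -> bool) -> protocol X Y R -> protocol X Y R -> protocol X Y R.
Arguments Leaf {X Y R}.
Arguments NodeA {X Y R}.
Arguments NodeB {X Y R}.

Fixpoint run {X Y R} (P : protocol X Y R) (x : X) (y : Y) : R :=
  match P with
  | Leaf r => r
  | NodeA f l r => if f x then run l x y else run r x y
  | NodeB g l r => if g y then run l x y else run r x y
  end.

Fixpoint depth {X Y R} (P : protocol X Y R) : nat :=
  match P with
  | Leaf _ => 0
  | NodeA _ l r => S (Nat.max (depth l) (depth r))
  | NodeB _ l r => S (Nat.max (depth l) (depth r))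
  end.

(* D(g_i) <= d, where g_i : {0,1}^i x {0,1}^(m-i) -> {0,1}, g_i(x,y) = g(xy),
   for a decision problem g (a Prop on words, output true iff g holds). *)
Definition split_cc_le (g : list bool -> Prop) (m i d : nat) : Prop :=
  exists P : protocol (list bool) (list bool) bool,
    (depth P <= d)%nat /\
    forall x y : list bool, length x = i -> length y = (m - i)%nat ->
      (run P x y = true <-> g (x ++ y)).

(* D(g restricted to {0,1}^m) <= d, i.e. max_{0<=i<m} D(g_i) <= d. *)
Definition cc_le (g : list bool -> Prop) (m d : nat) : Prop :=
  forall i : nat, (i < m)%nat -> split_cc_le g m i d.

(* Rule 28 maps a cell to [if left then ~self /\ ~right else self], so a
   pattern 01 is a wall: it is fixed forever, and the cells on either side of
   it evolve independently of the cells on the other side.  If u is not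
   constant, p_u has walls on both sides of any finite patch, which confine
   the differences forever: SInv is always true.  If u is constant, the
   background becomes 0^Z after one step; a patch differing from the background
   creates a 1, hence a wall on the left and a rightmost 1 moving right at
   unit speed, so the differences spread without bound.  SInv then holds
   exactly when both halves of the input equal the constant letter, which
   two bits of communication decide. *)
From Stdlib Require Import ZArith List.
From Stdlib Require Import Bool Lia Classical FunctionalExtensionality.
Open Scope Z_scope.

Lemma local_rule28 (a b c : bool) :
  local_rule 28 a b c = if a then negb b && negb c else b.
Proof. destruct a, b, c; reflexivity. Qed.

Lemma eca28E (c : config) (i : Z) :
  eca 28 c i = if c (i - 1) then negb (c i) && negb (c (i + 1)) else c i.
Proof. apply local_rule28. Qed.

Lemma eca28_locally_const (c : config) (b : bool) (i : Z) :
  c (i - 1) = b -> c i = b -> c (i + 1) = b -> eca 28 c i = false.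
Proof. intros H0 H1 H2. rewrite eca28E, H0, H1, H2. destruct b; reflexivity. Qed.

Lemma iterF_succ (F : config -> config) (t : nat) (c : config) :
  iterF F (S t) c = F (iterF F t c).
Proof. reflexivity. Qed.

Lemma bool_switch_between (c : config) (b : bool) (i0 i1 : Z) :
  i0 <= i1 -> c i0 = b -> c i1 = negb b ->
  exists p, i0 <= p < i1 /\ c p = b /\ c (p + 1) = negb b.
Proof.
  intros Hle H0. revert i1 Hle.
  apply (Z.le_ind (fun m => c m = negb b ->
    exists p, i0 <= p < m /\ c p = b /\ c (p + 1) = negb b));
    [intros ? ? ->; reflexivity | |].
  - rewrite H0. destruct b; discriminate.
  - intros m Hm IH Hsucc. rewrite <- Z.add_1_r in Hsucc.
    destruct (Bool.bool_dec (c m) b) as [Hb | Hb].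
    + exists m. repeat split; auto; lia.
    + assert (Hm' : c m = negb b) by (destruct b, (c m); simpl in *; congruence).
      destruct (IH Hm') as [p [Hp Hcp]]. exists p. split; [lia | exact Hcp].
Qed.

Definition wall (c : config) (p : Z) : Prop := c p = false /\ c (p + 1) = true.

Lemma eca28_wall (c : config) (p : Z) : wall c p -> wall (eca 28 c) p.
Proof.
  intros [H0 H1]. split; rewrite eca28E.
  - rewrite H0, H1. destruct (c (p - 1)); reflexivity.
  - replace (p + 1 - 1) with p by lia. rewrite H0, H1. reflexivity.
Qed.

Lemma eca28_agree_right (c c' : config) (p : Z) : wall c p ->
  (forall i, p <= i -> c i = c' i) -> forall i, p <= i -> eca 28 c i = eca 28 c' i.
Proof.
  intros Hw Hag i Hi.
  destruct (Z.eq_dec i p) as [-> | Hne].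
  - assert (Hw' : wall c' p) by (destruct Hw; split; rewrite <- Hag by lia; auto).
    destruct (eca28_wall _ _ Hw) as [-> _]. destruct (eca28_wall _ _ Hw') as [-> _].
    reflexivity.
  - unfold eca. rewrite !Hag by lia. reflexivity.
Qed.

Lemma eca28_agree_left (c c' : config) (p : Z) : wall c p ->
  (forall i, i <= p + 1 -> c i = c' i) ->
  forall i, i <= p + 1 -> eca 28 c i = eca 28 c' i.
Proof.
  intros Hw Hag i Hi.
  destruct (Z.eq_dec i (p + 1)) as [-> | Hne].
  - assert (Hw' : wall c' p) by (destruct Hw; split; rewrite <- Hag by lia; auto).
    destruct (eca28_wall _ _ Hw) as [_ ->]. destruct (eca28_wall _ _ Hw') as [_ ->].
    reflexivity.
  - unfold eca. rewrite !Hag by lia. reflexivity.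
Qed.

Lemma iter28_wall (c : config) (p : Z) (t : nat) :
  wall c p -> wall (iterF (eca 28) t c) p.
Proof.
  intros Hw. induction t as [|t IH]; [exact Hw |].
  rewrite iterF_succ. apply eca28_wall, IH.
Qed.

Lemma iter28_agree_right (c c' : config) (p : Z) : wall c p ->
  (forall i, p <= i -> c i = c' i) ->
  forall t i, p <= i -> iterF (eca 28) t c i = iterF (eca 28) t c' i.
Proof.
  intros Hw Hag t. induction t as [|t IH]; [exact Hag |].
  rewrite !iterF_succ. apply eca28_agree_right; [apply iter28_wall, Hw | exact IH].
Qed.

Lemma iter28_agree_left (c c' : config) (p : Z) : wall c p ->
  (forall i, i <= p + 1 -> c i = c' i) ->
  forall t i, i <= p + 1 -> iterF (eca 28) t c i = iterF (eca 28) t c' i.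
Proof.
  intros Hw Hag t. induction t as [|t IH]; [exact Hag |].
  rewrite !iterF_succ. apply eca28_agree_left; [apply iter28_wall, Hw | exact IH].
Qed.

Lemma iter28_diff_between_walls (c c' : config) (pL pR : Z) :
  wall c pL -> wall c pR -> (forall i, i <= pL + 1 \/ pR <= i -> c i = c' i) ->
  forall t i, iterF (eca 28) t c i <> iterF (eca 28) t c' i -> pL + 1 < i < pR.
Proof.
  intros HwL HwR Hag t i Hdiff.
  destruct (Z_le_gt_dec i (pL + 1)) as [Hi | Hi].
  { contradict Hdiff. apply (iter28_agree_left _ _ pL); auto. }
  destruct (Z_le_gt_dec pR i) as [Hi' | Hi'].
  { contradict Hdiff. apply (iter28_agree_right _ _ pR); auto. }
  lia.
Qed.

Lemma periodic_shift (u : list bool) (i k : Z) :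
  periodic u (i + k * Z.of_nat (length u)) = periodic u i.
Proof. unfold periodic. rewrite Z_mod_plus_full. reflexivity. Qed.

Lemma length_pos (u : list bool) : u <> nil -> 1 <= Z.of_nat (length u).
Proof. destruct u; [congruence | simpl; lia]. Qed.

Lemma periodic_wall_shift (u : list bool) (p k : Z) :
  wall (periodic u) p -> wall (periodic u) (p + k * Z.of_nat (length u)).
Proof.
  intros [H0 H1]. split; [now rewrite periodic_shift |].
  replace (p + k * Z.of_nat (length u) + 1) with (p + 1 + k * Z.of_nat (length u))
    by lia.
  now rewrite periodic_shift.
Qed.

(* A 0 and a 1 anywhere in p_u give a 1 to the right of a 0 after shifting
   the 1 by a multiple of the period. *)
Lemma periodic_wall (u : list bool) (a b : Z) : u <> nil ->
  periodic u a = false -> periodic u b = true -> exists p, wall (periodic u) p.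
Proof.
  intros Hu Ha Hb. pose proof (length_pos u Hu) as HL.
  set (b' := b + (Z.abs a + Z.abs b) * Z.of_nat (length u)).
  destruct (bool_switch_between (periodic u) false a b') as [p [_ Hp]].
  - unfold b'. nia.
  - exact Ha.
  - unfold b'. now rewrite periodic_shift.
  - now exists p.
Qed.

Lemma patch_outside (u z : list bool) (i : Z) :
  i < 0 \/ Z.of_nat (length z) <= i -> patch u z i = periodic u i.
Proof.
  intros H. unfold patch.
  destruct (0 <=? i) eqn:E1, (i <? Z.of_nat (length z)) eqn:E2; simpl; auto.
  apply Z.leb_le in E1; apply Z.ltb_lt in E2; lia.
Qed.

Lemma patch_inside (u z : list bool) (j : nat) :
  (j < length z)%nat -> patch u z (Z.of_nat j) = nth j z false.
Proof.
  intros Hj. unfold patch.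
  replace ((0 <=? Z.of_nat j) && (Z.of_nat j <? Z.of_nat (length z))) with true.
  - now rewrite Nat2Z.id.
  - symmetry. apply andb_true_iff. split; [apply Z.leb_le | apply Z.ltb_lt]; lia.
Qed.

Lemma sinv28_of_wall (u z : list bool) (p : Z) : u <> nil ->
  wall (periodic u) p -> SInv (eca 28) u z.
Proof.
  intros Hu Hw. pose proof (length_pos u Hu) as HL.
  set (L := Z.of_nat (length u)) in *. set (n := Z.of_nat (length z)).
  set (pL := p - (Z.abs p + 2) * L). set (pR := p + (Z.abs p + n + 1) * L).
  assert (HpL : pL + 1 < 0) by (unfold pL; nia).
  assert (HpR : n <= pR) by (unfold pR, n; nia).
  assert (HwL : wall (periodic u) pL).
  { replace pL with (p + - (Z.abs p + 2) * L) by (unfold pL; lia).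
    apply periodic_wall_shift, Hw. }
  assert (HwR : wall (periodic u) pR) by apply periodic_wall_shift, Hw.
  exists (pR - pL). intros t. exists pL. intros i Hdiff.
  enough (pL + 1 < i < pR) by lia.
  apply (iter28_diff_between_walls (periodic u) (patch u z) pL pR HwL HwR) with (t := t);
    [| exact Hdiff].
  intros j Hj. symmetry. apply patch_outside. lia.
Qed.

Lemma iter28_const (c : config) (b : bool) :
  (forall i, c i = b) -> forall t i, iterF (eca 28) (S t) c i = false.
Proof.
  intros Hc t. induction t as [|t IH]; intros i.
  - apply (eca28_locally_const c b); apply Hc.
  - rewrite iterF_succ. apply (eca28_locally_const _ false); apply IH.
Qed.

Lemma eca28_one_of_switch (c : config) (p : Z) :
  c p <> c (p + 1) -> exists q, eca 28 c q = true.
Proof.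
  intros Hsw. destruct (c p) eqn:Ep.
  - assert (Ep1 : c (p + 1) = false) by (destruct (c (p + 1)); congruence).
    destruct (c (p + 2)) eqn:Ep2.
    + exists (p + 2). rewrite eca28E.
      replace (p + 2 - 1) with (p + 1) by lia. now rewrite Ep1, Ep2.
    + exists (p + 1). rewrite eca28E.
      replace (p + 1 - 1) with p by lia. replace (p + 1 + 1) with (p + 2) by lia.
      now rewrite Ep, Ep1, Ep2.
  - exists (p + 1). rewrite eca28E.
    replace (p + 1 - 1) with p by lia. rewrite Ep. destruct (c (p + 1)); congruence.
Qed.

Lemma rightmost_true (c : config) (q : Z) (k : nat) :
  c q = true -> (forall i, q + Z.of_nat k < i -> c i = false) ->
  exists r, c r = true /\ forall i, r < i -> c i = false.
Proof.
  revert q. induction k as [|k IH]; intros q Hq Hbeyond.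
  - exists q. split; [exact Hq | intros i Hi; apply Hbeyond; lia].
  - destruct (c (q + Z.of_nat (S k))) eqn:Ek.
    + exists (q + Z.of_nat (S k)). split; [exact Ek | exact Hbeyond].
    + apply (IH q Hq). intros i Hi.
      destruct (Z.eq_dec i (q + Z.of_nat (S k))) as [-> | Hne]; [exact Ek |].
      apply Hbeyond. lia.
Qed.

Lemma iter28_rightmost_one (c : config) (r : Z) :
  c r = true -> (forall i, r < i -> c i = false) ->
  forall s : nat, iterF (eca 28) s c (r + Z.of_nat s) = true /\
    forall i, r + Z.of_nat s < i -> iterF (eca 28) s c i = false.
Proof.
  intros Hr Hbeyond s. induction s as [|s [Hs Hbs]].
  - rewrite Z.add_0_r. split; assumption.
  - rewrite iterF_succ. replace (r + Z.of_nat (S s)) with (r + Z.of_nat s + 1) by lia.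
    split.
    + rewrite eca28E. replace (r + Z.of_nat s + 1 - 1) with (r + Z.of_nat s) by lia.
      rewrite Hs, !Hbs by lia. reflexivity.
    + intros i Hi. rewrite eca28E, !Hbs by lia. reflexivity.
Qed.

Lemma finite_support_wall_and_front (c : config) (lo hi q : Z) :
  (forall i, i < lo \/ hi < i -> c i = false) -> c q = true ->
  exists p r, p < r /\ wall c p /\ c r = true /\ forall i, r < i -> c i = false.
Proof.
  intros Hout Hq.
  assert (Hlo : lo - 1 <= q)
    by (destruct (Z_le_gt_dec (lo - 1) q); [lia | rewrite Hout in Hq by lia; easy]).
  destruct (bool_switch_between c false (lo - 1) q Hlo) as [p [Hpq Hwall]];
    [apply Hout; lia | exact Hq |].
  destruct (rightmost_true c q (Z.to_nat (hi - q)) Hq) as [r [Hr Hbeyond]].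
  { intros i Hi. apply Hout. lia. }
  assert (Hqr : q <= r)
    by (destruct (Z_le_gt_dec q r); [lia | rewrite Hbeyond in Hq by lia; easy]).
  exists p, r. split; [lia | split; [exact Hwall | auto]].
Qed.

(* After the first step the configuration is 0 outside a finite window and
   contains a 1: a wall stays at its left end while its rightmost 1 moves
   right, so the difference with the all-0 background is unbounded. *)
Lemma not_sinv28_const (u z : list bool) (b : bool) (j : nat) :
  (forall i, periodic u i = b) -> (j < length z)%nat -> nth j z false = negb b ->
  ~ SInv (eca 28) u z.
Proof.
  intros Hb Hj Hzj [w Hw].
  set (n := Z.of_nat (length z)). set (c1 := eca 28 (patch u z)).
  assert (Hout : forall i, i < 0 \/ n <= i -> patch u z i = b)
    by (intros i Hi; rewrite patch_outside by exact Hi; apply Hb).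
  assert (Hc1_out : forall i, i < -1 \/ n < i -> c1 i = false)
    by (intros i Hi; apply (eca28_locally_const _ b); apply Hout; lia).
  assert (Hq : exists q, c1 q = true).
  { destruct (bool_switch_between (patch u z) b (-1) (Z.of_nat j))
      as [p [_ [Hp Hp1]]].
    - lia.
    - apply Hout; lia.
    - now rewrite patch_inside.
    - apply (eca28_one_of_switch _ p). rewrite Hp, Hp1. now destruct b. }
  destruct Hq as [q Hq].
  destruct (finite_support_wall_and_front c1 (-1) n q Hc1_out Hq)
    as [p [r [Hpr [Hwall [Hr Hbeyond]]]]].
  set (s := Z.to_nat (w + p - r + 2)).
  destruct (Hw (S s)) as [a Ha].
  assert (Hbg : forall i, iterF (eca 28) (S s) (periodic u) i = false)
    by apply (iter28_const _ b Hb).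
  assert (Hwall_s : iterF (eca 28) (S s) (patch u z) (p + 1) = true)
    by (unfold iterF; rewrite Nat.iter_succ_r; apply (iter28_wall c1 p s Hwall)).
  assert (Hfront_s : iterF (eca 28) (S s) (patch u z) (r + Z.of_nat s) = true)
    by (unfold iterF; rewrite Nat.iter_succ_r;
        apply (iter28_rightmost_one c1 r Hr Hbeyond s)).
  assert (a <= p + 1 < a + w) by (apply Ha; rewrite Hbg, Hwall_s; easy).
  assert (a <= r + Z.of_nat s < a + w) by (apply Ha; rewrite Hbg, Hfront_s; easy).
  unfold s in *. lia.
Qed.

Lemma forallb_false_nth (f : bool -> bool) (z : list bool) :
  forallb f z = false -> exists j, (j < length z)%nat /\ f (nth j z false) = false.
Proof.
  induction z as [|a z IH]; simpl; [discriminate |].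
  destruct (f a) eqn:Ea; simpl; intros H.
  - destruct (IH H) as [j [Hj Hf]]. exists (S j). simpl. split; [lia | exact Hf].
  - exists O. simpl. split; [lia | exact Ea].
Qed.

Lemma sinv28_const_iff (u z : list bool) (b : bool) :
  (forall i, periodic u i = b) -> SInv (eca 28) u z <-> forallb (Bool.eqb b) z = true.
Proof.
  intros Hb. split.
  - intros HS. destruct (forallb (Bool.eqb b) z) eqn:Ez; [reflexivity | exfalso].
    destruct (forallb_false_nth _ _ Ez) as [j [Hj Hf]].
    apply (not_sinv28_const u z b j Hb Hj); [| exact HS].
    destruct b, (nth j z false); easy.
  - intros Hz. rewrite forallb_forall in Hz.
    assert (E : patch u z = periodic u).
    { apply functional_extensionality. intros i. rewrite Hb. unfold patch.
      destruct ((0 <=? i) && (i <? Z.of_nat (length z))) eqn:E; [| apply Hb].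
      apply andb_true_iff in E. destruct E as [E1 E2].
      apply Z.leb_le in E1. apply Z.ltb_lt in E2. symmetry.
      apply Bool.eqb_prop, Hz, nth_In. lia. }
    exists 0. intros t. exists 0. intros i Hi. rewrite E in Hi. contradiction.
Qed.

Lemma cc_le_true (g : list bool -> Prop) (m d : nat) :
  (forall z, g z) -> cc_le g m d.
Proof.
  intros Hg i _. exists (Leaf true). split; [simpl; lia |].
  intros x y _ _. simpl. split; [intros _; apply Hg | reflexivity].
Qed.

Lemma cc_le_forallb (g : list bool -> Prop) (f : bool -> bool) (m : nat) :
  (forall z, g z <-> forallb f z = true) -> cc_le g m 2.
Proof.
  intros Hg i _.
  exists (NodeA (forallb f) (NodeB (forallb f) (Leaf true) (Leaf false)) (Leaf false)).
  split; [simpl; lia |].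
  intros x y _ _. rewrite Hg, forallb_app. simpl.
  destruct (forallb f x), (forallb f y); simpl; split; easy.
Qed.

Theorem mainTheorem6 :
  forall u : list bool, u <> nil ->
  exists C : nat, forall n : nat, cc_le (SInv (eca 28) u) n C.
Proof.
  intros u Hu. exists 2%nat. intros n.
  destruct (classic (forall i, periodic u i = periodic u 0)) as [Hconst | Hnonconst].
  - apply (cc_le_forallb _ (Bool.eqb (periodic u 0))).
    intros z. apply sinv28_const_iff, Hconst.
  - apply not_all_ex_not in Hnonconst. destruct Hnonconst as [i Hi].
    apply cc_le_true. intros z.
    assert (Hwall : exists p, wall (periodic u) p).
    { destruct (periodic u i) eqn:Ei, (periodic u 0) eqn:E0; try congruence.
      - now apply (periodic_wall u 0 i).
      - now apply (periodic_wall u i 0). }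
    destruct Hwall as [p Hp]. exact (sinv28_of_wall u z p Hu Hp).
Qed.
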